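(* Let $d\ge 2$ and let $G=(V,E)$ be any graph on $n$ vertices with maximum degree at most $d$. Let $\varepsilon>0$, let $p<(1-\varepsilon)/(d-1)$ be a contagion probability, and let $I_0\subseteq V$ be nonempty. Consider the Reed–Frost SIR process on $G$ with initial infectious set $I_0$ and contagion probability $p$. Then there is a constant $C>0$, depending only on $\varepsilon$, such that with high probability the process stops within $C\log n$ time steps and the total number of nodes that are ever infectious is at most $C|I_0|\log n$.
   Context: **Reed–Frost SIR process.** Let $G=(V,E)$ be a graph, $p\in[0,1]$ the contagion probability, and $I_0\subseteq V$ the initially infectious set. Time is discrete. At each time every node is in exactly one of three states: susceptible, infectious, or recovered. At time $0$ the nodes of $I_0$ are infectious and all other nodes are susceptible. At each step $t\to t+1$: - each node $u$ that is infectious at time $t$ independently, for each edge $\{u,v\}$ with $v$ susceptible at time $t$, infects $v$ with probability $p$; - a susceptible node infected by at least one neighbour becomes infectious at time $t+1$; - every node infectious at time $t$ becomes recovered at time $t+1$; - all other nodes keep their state. The process stops when there are no infectious nodes. **With high probability.** An event holds with high probability if it holds with probability at least $1-n^{-\Omega(1)}$, where $n=|V|$. *)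

From HB Require Import structures.
From mathcomp Require Import all_boot all_order all_algebra.
From mathcomp Require Import reals exp.
Set Implicit Arguments. Unset Strict Implicit. Unset Printing Implicit Defensive.
Import Order.TTheory GRing.Theory Num.Theory.
Local Open Scope ring_scope.

Inductive sir := Sus | Inf | Rec.

Definition sir_eqb (a b : sir) : bool :=
  match a, b with
  | Sus, Sus | Inf, Inf | Rec, Rec => true
  | _, _ => false
  end.
Lemma sir_eqP : Equality.axiom sir_eqb.
Proof. by case; case; constructor. Qed.
HB.instance Definition _ := hasDecEq.Build sir sir_eqP.

Section ReedFrost.
Variables (T : finType) (e : rel T) (I0 : {set T}).

(* Sample space: one independent Bernoulli(p) coin for every time step
   t < #|T| and every ordered pair (u, v); coin (t,u,v) decides whether an
   infectious u infects a susceptible neighbour v during step t -> t+1.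
   The process always stops by time #|T| (the infectious sets at different
   times are disjoint and nonempty until the process stops), so #|T| time
   steps of coins suffice. *)
Definition outcome := {ffun 'I_#|T| * T * T -> bool}.

Definition coin (w : outcome) (t : nat) (u v : T) : bool :=
  if (insub t : option 'I_#|T|) is Some i then w (i, u, v) else false.

Fixpoint rf_state (w : outcome) (t : nat) : T -> sir :=
  match t with
  | 0 => fun v => if v \in I0 then Inf else Sus
  | t'.+1 =>
      let s := rf_state w t' in
      fun v => match s v with
               | Inf => Rec
               | Rec => Rec
               | Sus => if [exists u, [&& s u == Inf, e u v & coin w t' u v]]
                        then Inf else Sus
               end
  end.

Definition rf_stopped (w : outcome) (t : nat) : bool :=
  [forall v, rf_state w t v != Inf].

(* nodes that are ever infectious (all times up to #|T|, after which the
   process has necessarily stopped) *)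
Definition rf_ever_infected (w : outcome) : {set T} :=
  [set v | [exists t : 'I_#|T|.+1, rf_state w t v == Inf]].

End ReedFrost.

Section Prob.
Variables (R : realType) (T : finType) (p : R).

Definition rf_weight (w : outcome T) : R :=
  \prod_(k : 'I_#|T| * T * T) (if w k then p else 1 - p).

Definition rf_prob (E : pred (outcome T)) : R :=
  \sum_(w : outcome T | E w) rf_weight w.
End Prob.

Definition rf_good (R : realType) (T : finType) (e : rel T) (I0 : {set T})
    (C : R) (w : outcome T) : bool :=
  [exists t : 'I_#|T|.+1,
      ((nat_of_ord t)%:R <= C * ln (#|T|%:R : R)) && rf_stopped e I0 w t]
  && ((#|rf_ever_infected e I0 w|%:R : R) <= C * #|I0|%:R * ln (#|T|%:R : R)).

From HB Require Import structures.
From mathcomp Require Import all_boot all_order all_algebra.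
From mathcomp Require Import reals exp sequences boolp.
From mathcomp Require Import ring lra zify.
Set Implicit Arguments. Unset Strict Implicit. Unset Printing Implicit Defensive.
Import Order.TTheory GRing.Theory Num.Theory.
Local Open Scope ring_scope.

(* Write rho = p (d - 1) <= 1 - eps and N = #|T|.  Every node infected after
   time 0 was infected through an edge whose other end is now recovered, so
   from the second generation on an infectious node has at most d - 1
   susceptible neighbours.  Resampling one layer of coins (the layers are
   independent under the product measure) turns this into two averaged
   one-step bounds:
   - E[#infectious at time t] <= 2 |I0| rho^t, hence by Markov the process
     has stopped at time ~ C log N except with probability O(1/N^2);
   - the potential s^#recovered * a^#infectious with a = 1 + eps and
     s = e^(eps^3/2) is a supermartingale, hence (Chernoff-style) more than
     C |I0| log N nodes are ever touched with probability O(1/N^3). *)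

Section Process.
Variables (T : finType) (e : rel T) (I0 : {set T}).

Definition rf_step (s : T -> sir) (c : {ffun T * T -> bool}) : T -> sir :=
  fun v => match s v with
           | Inf => Rec
           | Rec => Rec
           | Sus => if [exists u, [&& s u == Inf, e u v & c (u, v)]]
                    then Inf else Sus
           end.

Definition layer (w : outcome T) (t : nat) : {ffun T * T -> bool} :=
  [ffun x => coin w t x.1 x.2].

Lemma rf_stateS w t :
  rf_state e I0 w t.+1 = rf_step (rf_state e I0 w t) (layer w t).
Proof.
apply: funext => v /=; rewrite /rf_step.
case: (rf_state e I0 w t v) => //.
by congr (if _ then _ else _); apply: eq_existsb => u; rewrite ffunE.
Qed.

Definition n_inf (s : T -> sir) : nat := \sum_v (s v == Inf).
Definition n_rec (s : T -> sir) : nat := \sum_v (s v == Rec).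
Definition n_touched (s : T -> sir) : nat := \sum_v (s v != Sus).
Definition exposed (s : T -> sir) (x : T * T) : bool :=
  [&& s x.1 == Inf, s x.2 == Sus & e x.1 x.2].
Definition n_exposed (s : T -> sir) : nat := \sum_x exposed s x.

Lemma sum_pair (F : T * T -> nat) : \sum_x F x = \sum_u \sum_v F (u, v).
Proof. by rewrite pair_big /=; apply: eq_bigr => -[]. Qed.

Lemma n_rec_step s c : n_rec (rf_step s c) = (n_rec s + n_inf s)%N.
Proof.
rewrite /n_rec /n_inf -big_split /=; apply: eq_bigr => v _.
by rewrite /rf_step; case: (s v) => //=; case: ifP.
Qed.

Lemma n_inf_step s c : (n_inf (rf_step s c) <= \sum_x (exposed s x && c x))%N.
Proof.
rewrite /n_inf sum_pair exchange_big /=; apply: leq_sum => v _.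
rewrite /rf_step; case sv: (s v) => //.
case: ifP => // /existsP [u /and3P [su euv cuv]].
by rewrite (bigD1 u) //= /exposed /= su sv euv cuv.
Qed.

Lemma n_touched_step s c :
  (n_touched s + n_inf (rf_step s c) <= n_touched (rf_step s c))%N.
Proof.
rewrite /n_touched /n_inf -big_split /=; apply: leq_sum => v _.
by rewrite /rf_step; case: (s v) => //; case: ifP.
Qed.

Lemma n_inf_le_touched s : (n_inf s <= n_touched s)%N.
Proof. by apply: leq_sum => v _; case: (s v). Qed.

Lemma n_touched_le s : (n_touched s <= n_rec s + n_inf s)%N.
Proof.
rewrite /n_touched /n_rec /n_inf -big_split /=; apply: leq_sum => v _.
by case: (s v).
Qed.

Lemma n_touched_le_card s : (n_touched s <= #|T|)%N.
Proof. by rewrite -sum1_card; apply: leq_sum => v _; case: (_ != _). Qed.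

Lemma n_inf_gt0 s : ~~ [forall v, s v != Inf] -> (0 < n_inf s)%N.
Proof.
rewrite negb_forall => /existsP [v]; rewrite negbK => /eqP hv.
by rewrite /n_inf (bigD1 v) //= hv eqxx.
Qed.

(* After the first step every infectious node was infected by a neighbour,
   which is now recovered; this is why later generations can branch into at
   most d - 1 new nodes. *)
Definition rec_backed (s : T -> sir) :=
  forall v, s v = Inf -> exists u, s u = Rec /\ e v u.

Lemma rec_backed_step s c : symmetric e -> rec_backed (rf_step s c).
Proof.
move=> esym v; rewrite /rf_step; case sv: (s v) => //.
case: ifP => // /existsP [u /and3P [/eqP su euv _]] _.
by exists u; rewrite su esym.
Qed.

Variable d : nat.
Hypothesis deg : forall v : T, (#|[set u | e v u]| <= d)%N.

Lemma n_exposed_le s : (n_exposed s <= d * n_inf s)%N.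
Proof.
rewrite /n_exposed sum_pair /n_inf big_distrr /=; apply: leq_sum => u _.
rewrite /exposed /=; case: (s u =P Inf) => _ /=; last by rewrite big1.
rewrite muln1; apply: leq_trans (deg u).
rewrite -sum1_card [X in (_ <= X)%N]big_mkcond /=; apply: leq_sum => v _.
by rewrite inE; case: (e u v); rewrite ?andbF ?andbT //; case: (_ == _).
Qed.

Lemma n_exposed_le_backed s : rec_backed s -> (n_exposed s <= d.-1 * n_inf s)%N.
Proof.
move=> backed; rewrite /n_exposed sum_pair /n_inf big_distrr /=.
apply: leq_sum => u _; rewrite /exposed /=.
case: (s u =P Inf) => hu /=; last by rewrite big1.
have [w [sw euw]] := backed u hu.
have : (#|[set x | e u x] :\ w| <= d.-1)%N.
  have := deg u; rewrite (cardsD1 w) inE euw add1n => h.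
  by rewrite -ltnS (leq_trans h) // leqSpred.
rewrite muln1; apply: leq_trans.
rewrite -sum1_card [X in (_ <= X)%N]big_mkcond /=; apply: leq_sum => v _.
rewrite !inE; case: (v =P w) => [->|_]; first by rewrite sw.
by case: (e u v); rewrite ?andbF ?andbT //; case: (_ == _).
Qed.

End Process.

Section Run.
Variables (T : finType) (e : rel T) (I0 : {set T}).

Lemma touched_stays (w : outcome T) t t' v : (t <= t')%N ->
  rf_state e I0 w t v != Sus -> rf_state e I0 w t' v != Sus.
Proof.
move=> /subnK <-; elim: (t' - t)%N => [//|k IH] /IH.
by rewrite addSn rf_stateS /rf_step; case: (rf_state _ _ _ _ v).
Qed.

Lemma ever_infected_le (w : outcome T) :
  (#|rf_ever_infected e I0 w| <= n_touched (rf_state e I0 w #|T|))%N.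
Proof.
rewrite /n_touched -sum1_card big_mkcond /=; apply: leq_sum => v _.
rewrite inE; case: existsP => // -[t /eqP ht].
suff -> : rf_state e I0 w #|T| v != Sus by [].
by apply: (touched_stays (t := t)); rewrite ?ht // -ltnS ltn_ord.
Qed.

Lemma stoppedS (w : outcome T) t :
  rf_stopped e I0 w t -> rf_stopped e I0 w t.+1.
Proof.
move=> /forallP h; apply/forallP => v; rewrite rf_stateS /rf_step.
case: (rf_state e I0 w t v) => //; case: ifP => // /existsP [u /and3P [hu _ _]].
by move: (h u); rewrite hu.
Qed.

Lemma running_touched (w : outcome T) t :
  ~~ rf_stopped e I0 w t -> (t < n_touched (rf_state e I0 w t))%N.
Proof.
elim: t => [|t IH] h; first exact: leq_trans (n_inf_gt0 h) (n_inf_le_touched _).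
have h' : ~~ rf_stopped e I0 w t by apply: contra h; apply: stoppedS.
have := n_touched_step e (rf_state e I0 w t) (layer w t); rewrite -rf_stateS.
have := n_inf_gt0 h; have := IH h'; lia.
Qed.

(* at most #|T| nodes can be touched, so every run has stopped by #|T| *)
Lemma stopped_by_card (w : outcome T) : rf_stopped e I0 w #|T|.
Proof.
apply/negPn/negP => /running_touched.
by rewrite ltnNge n_touched_le_card.
Qed.

End Run.

Section Resample.
Variables (T : finType) (e : rel T) (I0 : {set T}).

Definition set_layer (w : outcome T) (i : 'I_#|T|) (c : {ffun T * T -> bool})
    : outcome T :=
  [ffun k : 'I_#|T| * T * T => if k.1.1 == i then c (k.1.2, k.2) else w k].

Lemma coin_ord (w : outcome T) (i : 'I_#|T|) u v : coin w i u v = w (i, u, v).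
Proof. by rewrite /coin; case: insubP => [j _ /val_inj -> //|]; rewrite ltn_ord. Qed.

Lemma layer_set_layer w i c : layer (set_layer w i c) i = c.
Proof. by apply/ffunP => -[u v]; rewrite !ffunE coin_ord ffunE /= eqxx. Qed.

Lemma set_layerK w i c : set_layer (set_layer w i c) i (layer w i) = w.
Proof.
apply/ffunP => -[[j u] v]; rewrite !ffunE /=.
by case: (j =P i) => [->|]; rewrite ?coin_ord ?ffunE.
Qed.

Lemma rf_state_set_layer_early w (i : 'I_#|T|) c t : (t <= i)%N ->
  rf_state e I0 (set_layer w i c) t = rf_state e I0 w t.
Proof.
elim: t => [//|t IH] lt; rewrite !rf_stateS IH ?(ltnW lt) //.
congr rf_step; apply/ffunP => -[u v]; rewrite !ffunE /= /coin.
case: insubP => [j _ vj|//]; rewrite ffunE /=.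
by case: (j =P i) => // ji; move: lt; rewrite -vj ji ltnn.
Qed.

Lemma rf_state_set_layer w (i : 'I_#|T|) c :
  rf_state e I0 (set_layer w i c) i.+1 = rf_step e (rf_state e I0 w i) c.
Proof. by rewrite rf_stateS rf_state_set_layer_early // layer_set_layer. Qed.

End Resample.

Section Coins.
Variables (R : realType) (T : finType) (p : R).
Hypotheses (p0 : 0 <= p) (p1 : p <= 1).

Definition bern (b : bool) : R := if b then p else 1 - p.
Definition layer_weight (c : {ffun T * T -> bool}) : R := \prod_x bern (c x).

Definition rf_expect (f : outcome T -> R) : R :=
  \sum_(w : outcome T) rf_weight p w * f w.

Lemma bern_ge0 b : 0 <= bern b.
Proof. by case: b => /=; rewrite ?subr_ge0. Qed.

Lemma sum_ffun_prod (K : finType) (g : K -> bool -> R) :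
  \sum_(c : {ffun K -> bool}) \prod_k g k (c k) = \prod_k (g k true + g k false).
Proof. by rewrite -bigA_distr_bigA; apply: eq_bigr => k _; rewrite big_bool. Qed.

Lemma layer_weight_ge0 c : 0 <= layer_weight c.
Proof. by apply: prodr_ge0 => x _; apply: bern_ge0. Qed.

Lemma layer_weight_sum : \sum_c layer_weight c = 1.
Proof.
by rewrite (sum_ffun_prod (fun _ => bern)) big1 // => x _; rewrite /= addrC subrK.
Qed.

Lemma rf_weight_ge0 (w : outcome T) : 0 <= rf_weight p w.
Proof. by apply: prodr_ge0 => x _; apply: bern_ge0. Qed.

Lemma rf_weight_sum : \sum_(w : outcome T) rf_weight p w = 1.
Proof.
by rewrite (sum_ffun_prod (fun _ => bern)) big1 // => k _; rewrite /= addrC subrK.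
Qed.

Lemma rf_weight_split (w : outcome T) (i : 'I_#|T|) :
  rf_weight p w = layer_weight (layer w i) * \prod_(k | k.1.1 != i) bern (w k).
Proof.
rewrite /rf_weight (bigID (fun k : 'I_#|T| * T * T => k.1.1 == i)) /=.
congr (_ * _); rewrite (reindex_onto (fun x : T * T => (i, x.1, x.2))
  (fun k => (k.1.2, k.2))) /=; last by move=> [[j u] v] /= /eqP ->.
by apply: eq_big => [[u v]|[u v] _]; rewrite ?ffunE ?coin_ord //= !eqxx.
Qed.

Lemma rf_weight_set_layer (w : outcome T) (i : 'I_#|T|) c :
  rf_weight p (set_layer w i c) * layer_weight (layer w i) =
  rf_weight p w * layer_weight c.
Proof.
rewrite (rf_weight_split (set_layer w i c) i) (rf_weight_split w i).
rewrite layer_set_layer (eq_bigr (fun k => bern (w k))); first by ring.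
by move=> k /negbTE hk; rewrite ffunE hk.
Qed.

(* independence of layer i from the rest *)
Lemma resample_layer (i : 'I_#|T|) (H : outcome T -> R) :
  rf_expect H =
  rf_expect (fun w => \sum_c layer_weight c * H (set_layer w i c)).
Proof.
pose phi (wc : outcome T * {ffun T * T -> bool}) :=
  (set_layer wc.1 i wc.2, layer wc.1 i).
have phiK : cancel phi phi by move=> [w c]; rewrite /phi set_layerK layer_set_layer.
rewrite /rf_expect; transitivity (\sum_w \sum_c rf_weight p w * layer_weight c * H w).
  by apply: eq_bigr => w _; rewrite -big_distrl -big_distrr /= layer_weight_sum mulr1.
symmetry; transitivity (\sum_w \sum_c
    rf_weight p w * layer_weight c * H (set_layer w i c)).
  by apply: eq_bigr => w _; rewrite big_distrr; apply: eq_bigr => c _; rewrite /= mulrA.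
rewrite !pair_big /= (reindex_inj (can_inj phiK)) /=.
by apply: eq_bigr => -[w c] _ /=; rewrite set_layerK rf_weight_set_layer.
Qed.

Lemma rf_expect_const k : rf_expect (fun _ => k) = k.
Proof. by rewrite /rf_expect -big_distrl /= rf_weight_sum mul1r. Qed.

Lemma rf_expect_le f g : (forall w, f w <= g w) -> rf_expect f <= rf_expect g.
Proof. by move=> h; apply: ler_sum => w _; apply: ler_wpM2l; rewrite ?rf_weight_ge0. Qed.

Lemma rf_expectB f g :
  rf_expect (fun w => f w - g w) = rf_expect f - rf_expect g.
Proof. by rewrite /rf_expect -sumrB; apply: eq_bigr => w _; rewrite mulrBr. Qed.

Lemma rf_expectZ k f : rf_expect (fun w => k * f w) = k * rf_expect f.
Proof. by rewrite /rf_expect big_distrr; apply: eq_bigr => w _ /=; rewrite mulrCA. Qed.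

Lemma rf_prob_expect (E : pred (outcome T)) :
  rf_prob p E = rf_expect (fun w => (E w)%:R).
Proof.
rewrite /rf_prob /rf_expect big_mkcond /=; apply: eq_bigr => w _.
by case: (E w); rewrite ?mulr1 ?mulr0.
Qed.

Variable (e : rel T).

(* exponential moment of one step: the new infections are dominated by a
   sum of n_exposed s independent Bernoulli(p) variables *)
Lemma step_exp_moment (a : R) (s : T -> sir) : 1 <= a ->
  \sum_c layer_weight c * a ^+ n_inf (rf_step e s c) <=
  (1 + p * (a - 1)) ^+ n_exposed e s.
Proof.
move=> a1.
apply: (@le_trans _ _ (\sum_c layer_weight c * a ^+ (\sum_x (exposed e s x && c x)))).
  apply: ler_sum => c _; apply: ler_wpM2l; first exact: layer_weight_ge0.
  exact: (ler_weXn2l a1 (n_inf_step e s c)).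
rewrite (eq_bigr (fun c : {ffun T * T -> bool} =>
    \prod_x (bern (c x) * a ^+ (exposed e s x && c x)))); last first.
  by move=> c _; rewrite big_split /= expr_sum.
rewrite (sum_ffun_prod (fun x b => bern b * a ^+ (exposed e s x && b))) /n_exposed.
rewrite expr_sum le_eqVlt; apply/orP; left; apply/eqP; apply: eq_bigr => x _ /=.
by case: (exposed e s x); rewrite /= ?expr0 ?expr1 /bern; ring.
Qed.

Lemma layer_marginal (x : T * T) : \sum_c layer_weight c * (c x)%:R = p.
Proof.
rewrite (eq_bigr (fun c : {ffun T * T -> bool} =>
    \prod_k (bern (c k) * (if k == x then (c k)%:R else 1)))); last first.
  move=> c _; rewrite big_split /=; congr (_ * _).
  by rewrite -big_mkcond /= big_pred1_eq.
rewrite (sum_ffun_prod (fun k b => bern b * (if k == x then b%:R else 1))).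
rewrite (bigD1 x) //= eqxx big1 ?mulr1 /=; first by rewrite /bern; ring.
by move=> k /negbTE ->; rewrite !mulr1 addrC subrK.
Qed.

Lemma step_mean (s : T -> sir) :
  \sum_c layer_weight c * (n_inf (rf_step e s c))%:R <= p * (n_exposed e s)%:R.
Proof.
apply: (@le_trans _ _
    (\sum_c layer_weight c * (\sum_x (exposed e s x && c x) : nat)%:R)).
  apply: ler_sum => c _; apply: ler_wpM2l; first exact: layer_weight_ge0.
  by rewrite ler_nat; apply: n_inf_step.
rewrite (eq_bigr (fun c : {ffun T * T -> bool} =>
    \sum_x (exposed e s x)%:R * (layer_weight c * (c x)%:R))); last first.
  move=> c _; rewrite natr_sum big_distrr /=; apply: eq_bigr => x _.
  by case: (exposed e s x); case: (c x); rewrite /= ?mulr0 ?mul0r ?mul1r.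
rewrite exchange_big /= /n_exposed natr_sum big_distrr /= le_eqVlt; apply/orP; left.
by apply/eqP; apply: eq_bigr => x _; rewrite -big_distrr /= layer_marginal mulrC.
Qed.

End Coins.

Section Generations.
Variables (R : realType) (T : finType) (e : rel T) (I0 : {set T}) (p : R) (d : nat).
Hypotheses (p0 : 0 <= p) (p1 : p <= 1).
Hypotheses (d2 : (2 <= d)%N) (esym : symmetric e)
  (deg : forall v : T, (#|[set u | e v u]| <= d)%N).

Let init : T -> sir := fun v => if v \in I0 then Inf else Sus.

Lemma rf_expect_step t (ht : (t < #|T|)%N) (F : (T -> sir) -> R) :
  rf_expect p (fun w => F (rf_state e I0 w t.+1)) =
  rf_expect p (fun w =>
    \sum_c layer_weight p c * F (rf_step e (rf_state e I0 w t) c)).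
Proof.
rewrite (resample_layer p (Ordinal ht)); congr rf_expect; apply: funext => w.
by apply: eq_bigr => c _; rewrite rf_state_set_layer.
Qed.

Lemma n_inf_init : n_inf init = #|I0|.
Proof.
rewrite /n_inf -sum1_card [RHS]big_mkcond /=; apply: eq_bigr => v _.
by rewrite /init; case: (v \in I0).
Qed.

Lemma n_rec_init : n_rec init = 0%N.
Proof. by rewrite /n_rec big1 // => v _; rewrite /init; case: (v \in I0). Qed.

Lemma rec_backed_state w t : rec_backed e (rf_state e I0 w t.+1).
Proof. by rewrite rf_stateS; apply: rec_backed_step. Qed.

(* the first generation may use all d edges, later ones only d - 1 *)
Lemma n_exposed_init : (n_exposed e init <= 2 * d.-1 * #|I0|)%N.
Proof.
apply: leq_trans (n_exposed_le deg init) _; rewrite n_inf_init leq_mul2r.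
by apply/orP; right; move: d2; clear; lia.
Qed.

Lemma mean_infectious t : (t.+1 <= #|T|)%N ->
  rf_expect p (fun w => (n_inf (rf_state e I0 w t.+1))%:R) <=
  2 * #|I0|%:R * (p * d.-1%:R) ^+ t.+1.
Proof.
elim: t => [|t IH] ht; rewrite (rf_expect_step ht (fun sg => (n_inf sg)%:R)).
  rewrite -[X in _ <= X](@rf_expect_const _ T p); apply: (rf_expect_le p0 p1) => w.
  apply: le_trans (step_mean p0 p1 e _) _.
  have := n_exposed_init; rewrite -(ler_nat R) !natrM => h.
  apply: le_trans (ler_wpM2l p0 h) _.
  by rewrite le_eqVlt; apply/orP; left; apply/eqP; ring.
apply: le_trans (_ : _ <= rf_expect p (fun w =>
    p * d.-1%:R * (n_inf (rf_state e I0 w t.+1))%:R)) _.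
  apply: (rf_expect_le p0 p1) => w; apply: le_trans (step_mean p0 p1 e _) _.
  rewrite -mulrA; apply: ler_wpM2l => //; rewrite -natrM ler_nat.
  exact/(n_exposed_le_backed deg)/rec_backed_state.
rewrite rf_expectZ; apply: le_trans (ler_wpM2l _ (IH (ltnW ht))) _.
  by rewrite mulr_ge0.
by rewrite [in X in _ <= X]exprS le_eqVlt; apply/orP; left; apply/eqP; ring.
Qed.

Section Potential.
Variables (s a : R).
Hypotheses (s1 : 1 <= s) (a1 : 1 <= a).
Hypothesis drift : s * (1 + p * (a - 1)) ^+ d.-1 <= a.

Definition potential (sg : T -> sir) : R := s ^+ n_rec sg * a ^+ n_inf sg.

Let q := 1 + p * (a - 1).

Lemma q_ge1 : 1 <= q.
Proof. by rewrite lerDl mulr_ge0 // subr_ge0. Qed.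

Lemma q_le_a : q ^+ d.-1 <= a.
Proof.
apply: le_trans drift; rewrite ler_peMl ?exprn_ge0 //.
exact: le_trans ler01 q_ge1.
Qed.

Lemma potential_step_le sg k : (n_exposed e sg <= k)%N ->
  \sum_c layer_weight p c * potential (rf_step e sg c) <=
  s ^+ (n_rec sg + n_inf sg) * q ^+ k.
Proof.
move=> hk; rewrite /potential.
rewrite (eq_bigr (fun c => s ^+ (n_rec sg + n_inf sg) *
   (layer_weight p c * a ^+ n_inf (rf_step e sg c)))); last first.
  by move=> c _; rewrite n_rec_step mulrCA.
rewrite -big_distrr /=; apply: ler_wpM2l; first by rewrite exprn_ge0 // (le_trans ler01).
apply: le_trans (step_exp_moment p0 p1 e sg a1) _.
exact: (ler_weXn2l q_ge1 hk).
Qed.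

Lemma potential_step sg : rec_backed e sg ->
  \sum_c layer_weight p c * potential (rf_step e sg c) <= potential sg.
Proof.
move=> backed; apply: le_trans (potential_step_le (n_exposed_le_backed deg backed)) _.
rewrite /potential exprD -mulrA exprM -exprMn; apply: ler_wpM2l.
  by rewrite exprn_ge0 // (le_trans ler01).
apply: lerXn2r; rewrite ?nnegrE ?(le_trans ler01 a1) //.
by rewrite mulr_ge0 ?exprn_ge0 ?(le_trans ler01 s1) ?(le_trans ler01 q_ge1).
Qed.

Lemma mean_potential t : (t.+1 <= #|T|)%N ->
  rf_expect p (fun w => potential (rf_state e I0 w t.+1)) <= (s * a ^+ 2) ^+ #|I0|.
Proof.
elim: t => [|t IH] ht; rewrite (rf_expect_step ht potential); last first.
  apply: le_trans (IH (ltnW ht)); apply: (rf_expect_le p0 p1) => w.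
  exact/potential_step/rec_backed_state.
rewrite -[X in _ <= X](@rf_expect_const _ T p); apply: (rf_expect_le p0 p1) => w.
apply: le_trans (potential_step_le n_exposed_init) _.
rewrite n_rec_init n_inf_init add0n exprMn; apply: ler_wpM2l.
  by rewrite exprn_ge0 // (le_trans ler01).
rewrite -exprM (_ : (2 * d.-1 * #|I0| = d.-1 * (2 * #|I0|))%N); last by lia.
have [q0 a0] := (le_trans ler01 q_ge1, le_trans ler01 a1).
by rewrite exprM mulnC; apply: lerXn2r; rewrite ?nnegrE ?q_le_a ?exprn_ge0.
Qed.

Lemma potential_ge sg : s ^+ n_touched sg <= potential sg.
Proof.
apply: (@le_trans _ _ (s ^+ (n_rec sg + n_inf sg))).
  by apply: ler_weXn2l => //; apply: n_touched_le.
rewrite exprD /potential; apply: ler_wpM2l; first by rewrite exprn_ge0 // (le_trans ler01).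
apply: lerXn2r; rewrite ?nnegrE ?(le_trans ler01) //.
apply: le_trans drift; apply: ler_peMr; first exact: le_trans ler01 s1.
exact/exprn_ege1/q_ge1.
Qed.

End Potential.

End Generations.

Section Calculus.
Variable R : realType.

(* from e^(-X) >= 1 - X *)
Lemma expR_mul_1B (X : R) : expR X * (1 - X) <= 1.
Proof.
rewrite -[leRHS](expRxMexpNx_1 X) ler_wpM2l ?expR_ge0 //.
by apply: le_trans (expR_ge1Dx _); rewrite addrC.
Qed.

(* If p k <= 1 - eps then e^(eps^3/2) (1 + p eps)^k <= 1 + eps: this is the
   drift condition making the potential with s = e^(eps^3/2), a = 1 + eps
   a supermartingale on graphs of degree at most k + 1. *)
Lemma drift_bound (eps p : R) (k : nat) : 0 < eps -> 0 <= p ->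
  p * k%:R <= 1 - eps -> expR (eps ^+ 3 / 2) * (1 + p * eps) ^+ k <= 1 + eps.
Proof.
move=> eps0 p0 hpk.
have eps1 : eps <= 1 by have := mulr_ge0 p0 (ler0n R k); lra.
set X := eps ^+ 3 / 2 + (1 - eps) * eps.
have powb : (1 + p * eps) ^+ k <= expR ((1 - eps) * eps).
  apply: (@le_trans _ _ (expR (p * eps) ^+ k)).
    apply: lerXn2r; rewrite ?nnegrE ?expR_ge0 ?expR_ge1Dx //.
    by rewrite addr_ge0 // mulr_ge0 // ltW.
  by rewrite -expRM_natl ler_expR mulrA (mulrC k%:R) ler_wpM2r // ltW.
apply: (@le_trans _ _ (expR X)).
  by rewrite /X expRD ler_wpM2l ?expR_ge0.
have gain : 1 <= (1 + eps) * (1 - X).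
  have -> : (1 + eps) * (1 - X) = 1 + eps ^+ 3 * (1 - eps) / 2.
    by rewrite /X; field.
  by rewrite lerDl divr_ge0 // mulr_ge0 ?subr_ge0 ?exprn_ge0 // ltW.
apply: (@le_trans _ _ (expR X * ((1 + eps) * (1 - X)))).
  by rewrite ler_peMr ?expR_ge0.
rewrite mulrCA ler_piMr //; first by rewrite addr_ge0 // ltW.
exact: expR_mul_1B.
Qed.

Lemma ln_ge1 (N : R) : expR 1 <= N -> 1 <= ln N.
Proof.
move=> hN; have N0 : 0 < N by apply: lt_le_trans hN; apply: expR_gt0.
by rewrite -ler_expR lnK // inE.
Qed.

Lemma tail_sum_le (N : R) : expR 3 + 2 * expR 1 + 2 <= N ->
  2 * expR 1 / N ^+ 2 + expR 3 / N ^+ 3 <= N^-1.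
Proof.
move=> hN; have [e1 e3] := (expR_gt0 (1 : R), expR_gt0 (3 : R)).
have N1 : 1 <= N by lra.
have N0 : 0 < N by lra.
have -> : 2 * expR 1 / N ^+ 2 + expR 3 / N ^+ 3 =
    N^-1 * ((2 * expR 1 + expR 3 / N) / N) by field; rewrite gt_eqF.
rewrite ler_piMr ?invr_ge0 ?(ltW N0) // ler_pdivrMr // mul1r.
have : expR 3 / N <= expR 3 by rewrite ler_pdivrMr // ler_peMr // ltW.
lra.
Qed.

End Calculus.

Definition rf_stops_by (R : realType) (T : finType) (e : rel T) (I0 : {set T})
    (C : R) (w : outcome T) : bool :=
  [exists t : 'I_#|T|.+1,
      ((nat_of_ord t)%:R <= C * ln (#|T|%:R : R)) && rf_stopped e I0 w t].

Definition rf_small (R : realType) (T : finType) (e : rel T) (I0 : {set T})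
    (C : R) (w : outcome T) : bool :=
  (#|rf_ever_infected e I0 w|%:R : R) <= C * #|I0|%:R * ln (#|T|%:R : R).

Lemma rf_goodE (R : realType) (T : finType) (e : rel T) (I0 : {set T}) (C : R) w :
  rf_good e I0 C w = rf_stops_by e I0 C w && rf_small e I0 C w.
Proof. by []. Qed.

Section Tails.
Variables (R : realType) (T : finType) (e : rel T) (I0 : {set T}).
Variables (p eps C : R) (d : nat).
Hypotheses (p0 : 0 <= p) (eps0 : 0 < eps) (rho_le : p * d.-1%:R <= 1 - eps).
Hypotheses (d2 : (2 <= d)%N) (esym : symmetric e)
  (deg : forall v : T, (#|[set u | e v u]| <= d)%N).
Hypotheses (I0_gt0 : (0 < #|I0|)%N) (lnN_ge1 : 1 <= ln (#|T|%:R : R)).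
Hypotheses (C_stop : 3 <= eps * C) (C_size : 3 <= eps ^+ 3 / 2 * C).

Let N : R := #|T|%:R.
Let L : R := ln N.

Lemma eps_le1 : eps <= 1.
Proof.
have := mulr_ge0 p0 (ler0n R d.-1); move: rho_le.
by move: (p * _) => rho; lra.
Qed.

Lemma p_le1 : p <= 1.
Proof.
have d1 : 1 <= d.-1%:R :> R by rewrite ler1n; move: d2; clear; lia.
apply: le_trans (ler_peMr p0 d1) _; move: rho_le eps0.
by move: (p * _) => rho; lra.
Qed.

Lemma N_gt0 : 0 < N.
Proof. by rewrite ltr0n (leq_trans I0_gt0) ?max_card. Qed.

Lemma expR_lnN (a : R) (k : nat) : expR (a - k%:R * L) = expR a / N ^+ k.
Proof. by rewrite expRB expRM_natl lnK // posrE N_gt0. Qed.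

Lemma C_ge0 : 0 <= C.
Proof. by rewrite -(pmulr_rge0 _ eps0); apply: le_trans C_stop. Qed.

Lemma not_stops_by_le (w : outcome T) (t : 'I_#|T|.+1) : t%:R <= C * L ->
  (~~ rf_stops_by e I0 C w)%:R <= (n_inf (rf_state e I0 w t))%:R :> R.
Proof.
move=> htC; case: (boolP (rf_stopped e I0 w t)) => hs.
  suff -> : rf_stops_by e I0 C w by [].
  by apply/existsP; exists t; rewrite htC.
by case: (~~ _); rewrite ?ler_nat ?(n_inf_gt0 hs).
Qed.

Lemma stop_tail :
  rf_expect p (fun w => (~~ rf_stops_by e I0 C w)%:R) <= 2 * expR 1 / N ^+ 2.
Proof.
have eps1 := eps_le1; have C0 := C_ge0; have L1 := lnN_ge1; have epsC := C_stop.
have C3 : 3 <= C by apply: le_trans epsC _; rewrite ler_piMl.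
have CL1 : 1 <= C * L by apply: le_trans (ler_peMr C0 L1); lra.
have CL0 : 0 <= C * L by lra.
have [t_le t_gt] := andP (truncn_itv CL0).
case: (ltnP (Num.truncn (C * L)) #|T|) => ht; last first.
  have all_stop w : rf_stops_by e I0 C w.
    apply/existsP; exists ord_max; rewrite stopped_by_card andbT /=.
    by rewrite -truncn_ge_nat.
  apply: le_trans (rf_expect_le p0 p_le1 (g := fun=> 0) _) _.
    by move=> w; rewrite all_stop.
  by rewrite rf_expect_const divr_ge0 ?exprn_ge0 ?mulr_ge0 ?expR_ge0 // ltW ?N_gt0.
have t0 : (0 < Num.truncn (C * L))%N by rewrite truncn_ge_nat.
move: ht t_le t_gt t0; case: (Num.truncn (C * L)) => [//|t] ht t_le t_gt _.
pose tt : 'I_#|T|.+1 := @Ordinal #|T|.+1 t.+1 (ltnW ht).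
apply: le_trans (rf_expect_le p0 p_le1 (fun w => not_stops_by_le w (t := tt) t_le)) _.
apply: le_trans (mean_infectious I0 p0 p_le1 d2 esym deg (ltnW ht)) _.
have decay : (p * d.-1%:R) ^+ t.+1 <= expR (1 - 3%:R * L).
  apply: (@le_trans _ _ (expR (- eps) ^+ t.+1)).
    apply: lerXn2r; rewrite ?nnegrE ?expR_ge0 ?mulr_ge0 //.
    by apply: le_trans rho_le _; apply: le_trans (expR_ge1Dx _); lra.
  rewrite -expRM_natl ler_expR; move: t_gt; rewrite -natr1; nra.
rewrite expR_lnN in decay; apply: (@le_trans _ _ (2 * N * (expR 1 / N ^+ 3))).
  apply: ler_pM => //; rewrite ?exprn_ge0 ?mulr_ge0 //.
  by rewrite ler_pM2l // ler_nat max_card.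
by rewrite le_eqVlt; apply/orP; left; apply/eqP; field; rewrite gt_eqF ?N_gt0.
Qed.

Let s : R := expR (eps ^+ 3 / 2).
Let a : R := 1 + eps.

Lemma s_ge1 : 1 <= s.
Proof.
apply: le_trans (expR_ge1Dx _).
by rewrite lerDl divr_ge0 // exprn_ge0 // ltW.
Qed.

Lemma a_ge1 : 1 <= a.
Proof. by rewrite lerDl ltW. Qed.

Lemma drift_rho : s * (1 + p * (a - 1)) ^+ d.-1 <= a.
Proof.
have -> : a - 1 = eps by rewrite /a; ring.
exact: drift_bound.
Qed.

(* Chernoff-type comparison: too many infected nodes force a large
   potential at time #|T| *)
Lemma not_small_le (w : outcome T) :
  (~~ rf_small e I0 C w)%:R <=
  expR (- (eps ^+ 3 / 2 * (C * #|I0|%:R * L))) *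
  potential s a (rf_state e I0 w #|T|).
Proof.
have [s0 a0] : 0 <= s /\ 0 <= a by rewrite (le_trans ler01 s_ge1) (le_trans ler01 a_ge1).
case: (boolP (rf_small e I0 C w)) => /= hsmall.
  by rewrite mulr_ge0 ?expR_ge0 // mulr_ge0 // exprn_ge0.
set sg := eps ^+ 3 / 2; set K := C * #|I0|%:R * L.
set st := rf_state e I0 w #|T|.
have many : K < (n_touched st)%:R.
  move: hsmall; rewrite /rf_small -ltNge => /lt_le_trans; apply.
  by rewrite ler_nat ever_infected_le.
have sg0 : 0 <= sg by rewrite divr_ge0 // exprn_ge0 // ltW.
have grow := potential_ge p0 s_ge1 a_ge1 drift_rho st.
apply: (le_trans _ (ler_wpM2l (expR_ge0 (- (sg * K))) grow)).
rewrite /s -/sg -expRM_natl -expRD; apply: le_trans (expR_ge1Dx _); rewrite lerDl.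
have gap : 0 <= (n_touched st)%:R - K by rewrite subr_ge0 ltW.
by have := mulr_ge0 sg0 gap; nra.
Qed.

Lemma size_tail :
  rf_expect p (fun w => (~~ rf_small e I0 C w)%:R) <= expR 3 / N ^+ 3.
Proof.
apply: le_trans (rf_expect_le p0 p_le1 not_small_le) _; rewrite rf_expectZ.
have nT : (0 < #|T|)%N by rewrite (leq_trans I0_gt0) ?max_card.
have := mean_potential I0 p0 p_le1 d2 esym deg s_ge1 a_ge1 drift_rho (t := #|T|.-1).
rewrite prednK // => /(_ (leqnn _)) hE.
apply: le_trans (ler_wpM2l (expR_ge0 _) hE) _.
have sa3 : s * a ^+ 2 <= expR 3.
  have se : s <= expR 1.
    have e3 : eps ^+ 3 <= 1 by rewrite exprn_ile1 ?eps_le1 // ltW.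
    by rewrite ler_expR; lra.
  have ae : a <= expR 1.
    by apply: le_trans (expR_ge1Dx eps) _; rewrite ler_expR eps_le1.
  have -> : expR 3 = expR 1 * expR 1 ^+ 2 :> R.
    by rewrite -expRM_natl -expRD; congr expR; ring.
  have a0 : 0 <= a := le_trans ler01 a_ge1.
  apply: ler_pM; rewrite ?exprn_ge0 ?(le_trans ler01 s_ge1) //.
  by apply: lerXn2r; rewrite ?nnegrE ?expR_ge0.
have sa0 : 0 <= s * a ^+ 2.
  by rewrite mulr_ge0 ?exprn_ge0 ?(le_trans ler01 s_ge1) ?(le_trans ler01 a_ge1).
apply: le_trans (ler_wpM2l (expR_ge0 _) (lerXn2r _ _ _ sa3)) _;
  rewrite ?nnegrE ?expR_ge0 //.
rewrite -expRM_natl -expRD -expR_lnN ler_expR.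
have m1 : 1 <= #|I0|%:R :> R by rewrite ler1n.
have L1 := lnN_ge1; have sgC := C_size.
have h1 : 0 <= (#|I0|%:R - 1) * (L - 1) by rewrite mulr_ge0 // subr_ge0.
have h2 : 0 <= (eps ^+ 3 / 2 * C - 3) * (#|I0|%:R * L).
  by rewrite mulr_ge0 ?subr_ge0 // mulr_ge0 // ?(le_trans ler01 m1) ?(le_trans ler01 L1).
nra.
Qed.

(* union bound over the two failure events *)
Lemma good_prob :
  1 - (2 * expR 1 / N ^+ 2 + expR 3 / N ^+ 3) <= rf_prob p (rf_good e I0 C).
Proof.
have ind w : 1 - (~~ rf_stops_by e I0 C w)%:R - (~~ rf_small e I0 C w)%:R <=
    (rf_good e I0 C w)%:R :> R.
  by rewrite rf_goodE; case: (rf_stops_by _ _ _ w); case: (rf_small _ _ _ w) => /=; lra.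
rewrite rf_prob_expect; apply: le_trans (rf_expect_le p0 p_le1 ind).
by rewrite !rf_expectB rf_expect_const; have := stop_tail; have := size_tail; lra.
Qed.

End Tails.

Definition rf_const (R : realType) (eps : R) : R := 6 / eps ^+ 3 + 3 / eps.

Lemma rf_const_spec (R : realType) (eps : R) : 0 < eps ->
  [/\ 0 < rf_const eps, 3 <= eps * rf_const eps & 3 <= eps ^+ 3 / 2 * rf_const eps].
Proof.
move=> eps0; have e0 : eps != 0 by rewrite gt_eqF.
split; first by rewrite addr_gt0 // divr_gt0 // exprn_gt0.
  have -> : eps * rf_const eps = 3 + 6 / eps ^+ 2 by rewrite /rf_const; field.
  by rewrite lerDl divr_ge0 // exprn_ge0 // ltW.
have -> : eps ^+ 3 / 2 * rf_const eps = 3 + 3 * eps ^+ 2 / 2.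
  by rewrite /rf_const; field.
by rewrite lerDl divr_ge0 // mulr_ge0 // exprn_ge0 // ltW.
Qed.

Theorem mainTheorem3 (R : realType) (eps : R) :
  0 < eps ->
  exists C : R, 0 < C /\
  exists c : R, 0 < c /\
  exists n0 : nat,
  forall (d : nat) (T : finType) (e : rel T) (p : R) (I0 : {set T}),
    (2 <= d)%N ->
    symmetric e -> irreflexive e ->
    (forall v : T, #|[set u | e v u]| <= d)%N ->
    0 <= p -> p < (1 - eps) / (d.-1)%:R ->
    I0 != set0 ->
    (n0 <= #|T|)%N ->
    1 - (#|T|%:R : R) `^ (- c) <= rf_prob p (rf_good e I0 C).
Proof.
move=> eps0; have [C0 C_stop C_size] := rf_const_spec eps0.
exists (rf_const eps); split => //; exists 1; split => //.
pose K0 : R := expR 3 + 2 * expR 1 + 2.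
exists (Num.truncn K0).+1 => d T e p I0 d2 esym _ deg p0 hp I0_ne hn.
have rho_le : p * d.-1%:R <= 1 - eps.
  by rewrite -ler_pdivlMr ?ltW // ltr0n; move: d2; clear; lia.
have NK : K0 <= #|T|%:R.
  apply: ltW; rewrite -truncn_lt_nat //.
  by rewrite /K0 !addr_ge0 ?mulr_ge0 ?expR_ge0.
have L1 : 1 <= ln (#|T|%:R : R).
  apply: ln_ge1; apply: le_trans NK; rewrite /K0.
  by have := expR_gt0 (3 : R); have := expR_gt0 (1 : R); lra.
rewrite powR_inv1 ?ler0n //; apply: le_trans (good_prob p0 eps0 rho_le d2 esym deg
  _ L1 C_stop C_size); last by rewrite card_gt0.
by rewrite lerB // tail_sum_le.
Qed.
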